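(* Let $A\in\mathbb{R}^{m\times n}$, $b\in\mathbb{R}^m$, $f(x)=\frac12\|Ax-b\|^2$, and let $x^k,x^{k-1}\in\mathbb{R}^n$ with $\nabla f(x^k)\neq 0$ and $x^k\neq x^{k-1}$. Let $g=\nabla f(x^k)/\|\nabla f(x^k)\|$, $d=(x^k-x^{k-1})/\|x^k-x^{k-1}\|$, $\epsilon=g^td$, $S_{11}=g^tA^tAg$, $S_{12}=g^tA^tAd$, $S_{22}=d^tA^tAd$, $\eta_1=1-\epsilon^2$, $\eta_2=-S_{11}-S_{22}+2\epsilon S_{12}$, $\eta_3=S_{11}S_{22}-S_{12}^2$. Then the equation $\eta_1\sigma^2+\eta_2\sigma+\eta_3=0$ has a real solution $\sigma$.
   Context: $\|\cdot\|$ denotes the Euclidean norm. *)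

From mathcomp Require Import all_boot all_order all_algebra.
From mathcomp Require Import reals.
Set Implicit Arguments. Unset Strict Implicit. Unset Printing Implicit Defensive.
Import Order.TTheory GRing.Theory Num.Theory.
Local Open Scope ring_scope.

Definition dotv (R : realType) (n : nat) (u v : 'cV[R]_n) : R := \sum_(i < n) u i 0 * v i 0.

Definition enorm (R : realType) (n : nat) (u : 'cV[R]_n) : R := Num.sqrt (dotv u u).

Definition lsq (R : realType) (m n : nat) (A : 'M[R]_(m, n)) (b : 'cV[R]_m) (x : 'cV[R]_n) : R :=
  2^-1 * enorm (A *m x - b) ^+ 2.

Definition lsq_grad (R : realType) (m n : nat) (A : 'M[R]_(m, n)) (b : 'cV[R]_m) (x : 'cV[R]_n) : 'cV[R]_n :=
  A^T *m (A *m x - b).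

From mathcomp Require Import all_boot all_order all_algebra.
From mathcomp Require Import reals.
From mathcomp Require Import ring lra.
Import Order.TTheory GRing.Theory Num.Theory.
Local Open Scope ring_scope.

(* Since g and d are unit vectors, Cauchy-Schwarz gives eta1 = 1 - (g.d)^2 >= 0
   and eta3 = |Ag|^2 |Ad|^2 - (Ag.Ad)^2 >= 0, and at sigma = S11 the quadratic
   collapses to -(S12 - eps S11)^2 <= 0.  A real quadratic with nonnegative
   leading and constant coefficients that takes a nonpositive value has a real
   root: its discriminant is nonnegative, or it degenerates to a linear or zero
   polynomial. *)

Section Quadratic.
Variable R : rcfType.
Implicit Types a b c s : R.

Lemma deg2_discr_ge0 a b c s :
  0 < a -> a * s ^+ 2 + b * s + c <= 0 -> 0 <= b ^+ 2 - 4 * a * c.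
Proof.
move=> a_gt0 hs.
have : 4 * a * (a * s ^+ 2 + b * s + c) <= 0 by rewrite pmulr_rle0 // mulr_gt0.
have : 0 <= (2 * a * s + b) ^+ 2 by exact: sqr_ge0.
nra.
Qed.

Lemma deg2_root_discr a b c :
  a != 0 -> 0 <= b ^+ 2 - 4 * a * c -> exists x, a * x ^+ 2 + b * x + c = 0.
Proof.
set D := b ^+ 2 - 4 * a * c => a_neq0 D_ge0.
exists ((- b + Num.sqrt D) / (2 * a)).
have sqrtD : Num.sqrt D ^+ 2 = D by rewrite sqr_sqrtr.
have a2_neq0 : 2 * a != 0 by rewrite mulf_neq0 // pnatr_eq0.
have -> : a * ((- b + Num.sqrt D) / (2 * a)) ^+ 2 + b * ((- b + Num.sqrt D) / (2 * a)) + c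
          = a * (Num.sqrt D ^+ 2 - D) / (2 * a) ^+ 2 by rewrite /D; field.
by rewrite sqrtD subrr mulr0 mul0r.
Qed.

Lemma deg2_root a b c s :
  0 <= a -> 0 <= c -> a * s ^+ 2 + b * s + c <= 0 ->
  exists x, a * x ^+ 2 + b * x + c = 0.
Proof.
move=> a_ge0 c_ge0 hs; have [a0|a_neq0] := eqVneq a 0.
  have [b0|b_neq0] := eqVneq b 0; last by exists (- c / b); rewrite a0; field.
  exists 0; apply/eqP; rewrite eq_le; move: hs.
  by rewrite a0 b0 !mul0r !add0r => ->.
apply: deg2_root_discr => //; apply: deg2_discr_ge0 hs.
by rewrite lt_def a_neq0.
Qed.

End Quadratic.

Section Dotv.
Variables (R : realType) (n : nat).
Implicit Types (u v : 'cV[R]_n).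

Lemma dotvv_ge0 u : 0 <= dotv u u.
Proof. by apply: sumr_ge0 => i _; rewrite -expr2 sqr_ge0. Qed.

Lemma dotvv_eq0 u : (dotv u u == 0) = (u == 0).
Proof.
apply/idP/eqP => [|->]; last by rewrite /dotv big1 // => i _; rewrite mxE mul0r.
rewrite /dotv psumr_eq0 => [/allP u0|i _]; last by rewrite -expr2 sqr_ge0.
apply/matrixP => i j; rewrite (ord1 j) mxE.
by have := u0 i (mem_index_enum i); rewrite /= mulf_eq0 orbb => /eqP.
Qed.

Lemma dotv0 u : dotv u 0 = 0.
Proof. by rewrite /dotv big1 // => i _; rewrite mxE mulr0. Qed.

Lemma dotvZZ c u : dotv (c *: u) (c *: u) = c ^+ 2 * dotv u u.
Proof. by rewrite /dotv mulr_sumr; apply: eq_bigr => i _; rewrite !mxE; ring. Qed.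

Lemma dotv_subZ u v t : dotv (u - t *: v) (u - t *: v) =
  dotv u u - 2 * t * dotv u v + t ^+ 2 * dotv v v.
Proof.
rewrite /dotv !mulr_sumr -sumrN -!big_split /=.
by apply: eq_bigr => i _; rewrite !mxE; ring.
Qed.

Lemma dotv_CauchySchwarz u v : dotv u v ^+ 2 <= dotv u u * dotv v v.
Proof.
have [v0|v_neq0] := eqVneq v 0; first by rewrite v0 !dotv0 expr0n mulr0.
have vv_gt0 : 0 < dotv v v by rewrite lt_def dotvv_eq0 v_neq0 dotvv_ge0.
have := dotvv_ge0 (u - (dotv u v / dotv v v) *: v).
rewrite dotv_subZ -(pmulr_rge0 _ vv_gt0).
set uu := dotv u u; set uv := dotv u v; set vv := dotv v v.
have -> : vv * (uu - 2 * (uv / vv) * uv + (uv / vv) ^+ 2 * vv) = uu * vv - uv ^+ 2.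
  by field; rewrite gt_eqF.
by rewrite subr_ge0.
Qed.

Lemma dotv_normalize u : u != 0 ->
  dotv ((enorm u)^-1 *: u) ((enorm u)^-1 *: u) = 1.
Proof.
move=> u_neq0; rewrite dotvZZ /enorm exprVn sqr_sqrtr ?dotvv_ge0 // mulVf //.
by rewrite dotvv_eq0.
Qed.

End Dotv.

Theorem claim1 (R : realType) (m n : nat) (A : 'M[R]_(m, n)) (b : 'cV[R]_m)
  (xk xk1 : 'cV[R]_n) :
  lsq_grad A b xk != 0 -> xk != xk1 ->
  let g := (enorm (lsq_grad A b xk))^-1 *: lsq_grad A b xk in
  let d := (enorm (xk - xk1))^-1 *: (xk - xk1) in
  let eps := dotv g d in
  let S11 := dotv (A *m g) (A *m g) in
  let S12 := dotv (A *m g) (A *m d) in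
  let S22 := dotv (A *m d) (A *m d) in
  let eta1 := 1 - eps ^+ 2 in
  let eta2 := - S11 - S22 + 2 * eps * S12 in
  let eta3 := S11 * S22 - S12 ^+ 2 in
  exists sigma : R, eta1 * sigma ^+ 2 + eta2 * sigma + eta3 = 0.
Proof.
move=> grad_neq0 xk_neq g d eps S11 S12 S22 eta1 eta2 eta3.
have gg : dotv g g = 1 by exact: dotv_normalize.
have dd : dotv d d = 1 by apply: dotv_normalize; rewrite subr_eq0.
have eta1_ge0 : 0 <= eta1.
  by rewrite subr_ge0 -[1](mulr1 1) -{1}gg -dd dotv_CauchySchwarz.
have eta3_ge0 : 0 <= eta3 by rewrite subr_ge0 dotv_CauchySchwarz.
apply: (@deg2_root _ _ _ _ S11 eta1_ge0 eta3_ge0).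
have -> : eta1 * S11 ^+ 2 + eta2 * S11 + eta3 = - (S12 - eps * S11) ^+ 2.
  by rewrite /eta1 /eta2 /eta3; ring.
by rewrite oppr_le0 sqr_ge0.
Qed.
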